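(* Let $a\in\mathbb{D}\setminus\{0\}$ and $\alpha,\beta\in\mathbb{C}$ with $\beta\neq0$. If $\alpha+\beta K_a$ is $\mathcal{H}^2_{\omega}$-inner, then $\alpha=-\beta K_a(a)$ and $$\alpha+\beta K_a=\mu\,\frac{K_a(a)-K_a}{\sqrt{K_a(a)\,(K_a(a)-1)}}$$ for some $\mu\in\mathbb{C}$ with $|\mu|=1$; conversely every such function is $\mathcal{H}^2_{\omega}$-inner.
   Context: Let $\omega=\{\omega_n\}_{n\geq 0}$ be a sequence of positive reals with $\omega_0=1$ and $\lim_{n\to\infty}\omega_{n+1}/\omega_n=1$. $\mathcal{H}^2_{\omega}$ is the Hilbert space of power series $f(z)=\sum_{n\ge0}a_nz^n$ with $\|f\|^2=\sum_{n\geq0}\omega_n|a_n|^2<\infty$ and inner product $\langle f,g\rangle=\sum_n\omega_na_n\overline{b_n}$; its reproducing kernel on $\mathbb{D}$ is $K_\lambda(z)=\sum_{n\ge0}\overline{\lambda}^nz^n/\omega_n$. A function $f$ is $\mathcal{H}^2_{\omega}$-inner if $\|f\|=1$ and $\langle z^mf,f\rangle=0$ for all integers $m\geq1$. *)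

From Stdlib Require Import Reals.
Open Scope R_scope.

Definition Cplx : Type := (R * R)%type.
Definition Cre (z : Cplx) : R := fst z.
Definition Cim (z : Cplx) : R := snd z.
Definition RtoC (x : R) : Cplx := (x, 0).
Definition Czero : Cplx := (0, 0).
Definition Cone : Cplx := (1, 0).
Definition Cadd (z w : Cplx) : Cplx := (fst z + fst w, snd z + snd w).
Definition Copp (z : Cplx) : Cplx := (- fst z, - snd z).
Definition Csub (z w : Cplx) : Cplx := Cadd z (Copp w).
Definition Cmul (z w : Cplx) : Cplx :=
  (fst z * fst w - snd z * snd w, fst z * snd w + snd z * fst w).
Definition Cconj (z : Cplx) : Cplx := (fst z, - snd z).
Definition Cnorm2 (z : Cplx) : R := fst z * fst z + snd z * snd z.
Definition Cmod (z : Cplx) : R := sqrt (Cnorm2 z).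
Definition Cscale (r : R) (z : Cplx) : Cplx := (r * fst z, r * snd z).
Fixpoint Cpow (z : Cplx) (n : nat) : Cplx :=
  match n with O => Cone | S k => Cmul z (Cpow z k) end.

Definition Cseries (u : nat -> Cplx) (l : Cplx) : Prop :=
  infinite_sum (fun n => fst (u n)) (fst l) /\
  infinite_sum (fun n => snd (u n)) (snd l).

Definition admissible_weight (omega : nat -> R) : Prop :=
  (forall n, 0 < omega n) /\ omega O = 1 /\
  Un_cv (fun n => omega (S n) / omega n) 1.

(** Elements of H^2_omega are represented by their Taylor coefficient
    sequences f = sum_n f n z^n. *)
Definition in_H2 (omega : nat -> R) (f : nat -> Cplx) : Prop :=
  exists l, infinite_sum (fun n => omega n * Cnorm2 (f n)) l.

Definition H2_norm2 (omega : nat -> R) (f : nat -> Cplx) (l : R) : Prop :=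
  infinite_sum (fun n => omega n * Cnorm2 (f n)) l.

Definition H2_inner (omega : nat -> R) (f g : nat -> Cplx) (l : Cplx) : Prop :=
  Cseries (fun n => Cscale (omega n) (Cmul (f n) (Cconj (g n)))) l.

(** coefficients of z^m f *)
Definition zshift (m : nat) (f : nat -> Cplx) : nat -> Cplx :=
  fun n => if Nat.ltb n m then Czero else f (n - m)%nat.

Definition H2_inner_fun (omega : nat -> R) (f : nat -> Cplx) : Prop :=
  in_H2 omega f /\ H2_norm2 omega f 1 /\
  forall m : nat, (1 <= m)%nat -> H2_inner omega (zshift m f) f Czero.

(** Reproducing kernel K_lambda(z) = sum_n conj(lambda)^n z^n / omega_n *)
Definition Kker (omega : nat -> R) (lam : Cplx) : nat -> Cplx :=
  fun n => Cscale (/ omega n) (Cpow (Cconj lam) n).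

Definition peval (f : nat -> Cplx) (z : Cplx) (l : Cplx) : Prop :=
  Cseries (fun n => Cmul (f n) (Cpow z n)) l.

Definition Cconst (c : Cplx) : nat -> Cplx := fun n => match n with O => c | _ => Czero end.
Definition Fadd (f g : nat -> Cplx) : nat -> Cplx := fun n => Cadd (f n) (g n).
Definition Fscale (c : Cplx) (f : nat -> Cplx) : nat -> Cplx := fun n => Cmul c (f n).

(** The function [g = alpha + beta K_a] has coefficients [g_0 = alpha + beta]
    and [g_n = beta conj(a)^n / omega_n] for [n >= 1]; writing
    [S = K_a(a) = sum_n |a|^(2n) / omega_n], a direct computation gives
    [<z^m g, g> = a^m conj(beta) (beta S + alpha)] and
    [||g||^2 = |beta|^2 S + |alpha + beta|^2 - |beta|^2].
    Since [a <> 0] and [beta <> 0], the inner condition forces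
    [alpha = - beta S], and then [||g|| = 1] reads [|beta|^2 S (S - 1) = 1];
    conversely these two conditions make every [<z^m g, g>] vanish. *)

From Stdlib Require Import Reals Lra Lia FunctionalExtensionality.
Open Scope R_scope.

Ltac Cplx_componentwise :=
  intros; try apply injective_projections;
  unfold RtoC, Czero, Cone, Cadd, Copp, Cmul, Cconj, Cscale, Cnorm2; simpl; ring.

Lemma Cplx_ring : ring_theory Czero Cone Cadd Cmul Csub Copp (@eq Cplx).
Proof. constructor; unfold Csub; Cplx_componentwise. Qed.
Add Ring Cplx_ring : Cplx_ring.

Lemma Cscale_RtoC s z : Cscale s z = Cmul (RtoC s) z.
Proof. Cplx_componentwise. Qed.

Lemma RtoC_mul x y : Cmul (RtoC x) (RtoC y) = RtoC (x * y).
Proof. Cplx_componentwise. Qed.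

Lemma Cpow_add z m k : Cpow z (m + k) = Cmul (Cpow z m) (Cpow z k).
Proof. induction m as [|m IH]; simpl; [ring | rewrite IH; ring]. Qed.

Lemma Cconj_mul x y : Cconj (Cmul x y) = Cmul (Cconj x) (Cconj y).
Proof. Cplx_componentwise. Qed.

Lemma Cconj_involutive z : Cconj (Cconj z) = z.
Proof. Cplx_componentwise. Qed.

Lemma Cconj_RtoC x : Cconj (RtoC x) = RtoC x.
Proof. Cplx_componentwise. Qed.

Lemma Cconj_pow z n : Cconj (Cpow z n) = Cpow (Cconj z) n.
Proof.
  induction n as [|n IH]; simpl; [Cplx_componentwise|].
  rewrite Cconj_mul, IH; reflexivity.
Qed.

Lemma Cnorm2_mul x y : Cnorm2 (Cmul x y) = Cnorm2 x * Cnorm2 y.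
Proof. Cplx_componentwise. Qed.

Lemma Cnorm2_RtoC x : Cnorm2 (RtoC x) = x * x.
Proof. Cplx_componentwise. Qed.

Lemma Cnorm2_conj z : Cnorm2 (Cconj z) = Cnorm2 z.
Proof. Cplx_componentwise. Qed.

Lemma Cnorm2_opp z : Cnorm2 (Copp z) = Cnorm2 z.
Proof. Cplx_componentwise. Qed.

Lemma Cnorm2_pow z n : Cnorm2 (Cpow z n) = Cnorm2 z ^ n.
Proof.
  induction n as [|n IH]; simpl; [Cplx_componentwise|].
  rewrite Cnorm2_mul, IH; reflexivity.
Qed.

Lemma Cnorm2_ge0 z : 0 <= Cnorm2 z.
Proof. destruct z; unfold Cnorm2; simpl; nra. Qed.

Lemma Cnorm2_eq0 z : Cnorm2 z = 0 -> z = Czero.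
Proof.
  destruct z as [x y]; unfold Cnorm2, Czero; simpl; intro h.
  assert (x = 0) by nra; assert (y = 0) by nra; subst; reflexivity.
Qed.

Lemma Cnorm2_gt0 z : z <> Czero -> 0 < Cnorm2 z.
Proof.
  intro hz; destruct (Rle_lt_or_eq_dec _ _ (Cnorm2_ge0 z)) as [|h]; [assumption|].
  exfalso; apply hz, Cnorm2_eq0; auto.
Qed.

Lemma Cmul_conj_pow z n : Cmul (Cpow (Cconj z) n) (Cpow z n) = RtoC (Cnorm2 z ^ n).
Proof.
  rewrite <- Cconj_pow, <- Cnorm2_pow.
  generalize (Cpow z n); Cplx_componentwise.
Qed.

Lemma Cmul_integral x y : Cmul x y = Czero -> x = Czero \/ y = Czero.
Proof.
  intro h.
  assert (h2 : Cnorm2 x * Cnorm2 y = 0)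
    by (rewrite <- Cnorm2_mul, h; unfold Cnorm2, Czero; simpl; ring).
  destruct (Rmult_integral _ _ h2); [left | right]; apply Cnorm2_eq0; assumption.
Qed.

Lemma Cmul_RtoC_inv_r x s : s <> 0 -> Cmul (Cmul x (RtoC s)) (RtoC (/ s)) = x.
Proof.
  intro hs; transitivity (Cmul x (Cmul (RtoC s) (RtoC (/ s)))); [ring|].
  rewrite RtoC_mul, Rinv_r by exact hs; change (RtoC 1) with Cone; ring.
Qed.

Lemma Cnorm2_mul_RtoC_inv mu s :
  s <> 0 -> Cnorm2 (Cmul mu (RtoC (/ s))) * (s * s) = Cnorm2 mu.
Proof. intro hs; rewrite Cnorm2_mul, Cnorm2_RtoC; field; exact hs. Qed.

Lemma Cmod_eq1 z : Cmod z = 1 <-> Cnorm2 z = 1.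
Proof.
  unfold Cmod; split; intro h.
  - rewrite <- (sqrt_sqrt (Cnorm2 z)), h by apply Cnorm2_ge0; ring.
  - rewrite h; apply sqrt_1.
Qed.

Lemma infinite_sum_affine (u v : nat -> R) (l c d : R) :
  infinite_sum u l ->
  (forall n, v n = c * u n + match n with O => d | _ => 0 end) ->
  infinite_sum v (c * l + d).
Proof.
  intros hu hv.
  assert (partial : forall n, sum_f_R0 v n = c * sum_f_R0 u n + d).
  { induction n as [|n IH]; simpl; rewrite hv; [ring | rewrite IH; ring]. }
  assert (hlim : Un_cv (fun n => c * sum_f_R0 u n + d) (c * l + d)).
  { apply CV_plus; [apply CV_mult; [|exact hu] |];
      intros e he; exists O; intros; unfold Rdist; rewrite Rminus_diag, Rabs_R0; lra. }
  intros e he; destruct (hlim e he) as [N hN]; exists N; intros n hn.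
  rewrite partial; apply hN, hn.
Qed.

Lemma infinite_sum_ext (u v : nat -> R) (l : R) :
  (forall n, u n = v n) -> infinite_sum u l -> infinite_sum v l.
Proof.
  intros huv hu e he; destruct (hu e he) as [N hN]; exists N; intros n hn.
  rewrite <- (sum_eq u v n) by (intros; apply huv); apply hN, hn.
Qed.

Lemma infinite_sum_0 : infinite_sum (fun _ => 0) 0.
Proof.
  intros e he; exists O; intros n _.
  unfold Rdist; rewrite sum_cte, Rmult_0_l, Rminus_diag, Rabs_R0; exact he.
Qed.

Lemma infinite_sum_shift (u : nat -> R) (m : nat) (l : R) :
  (forall n, (n < m)%nat -> u n = 0) ->
  infinite_sum (fun k => u (m + k)%nat) l -> infinite_sum u l.
Proof.
  intros hlow hs.
  assert (partial : forall k, sum_f_R0 u (m + k) = sum_f_R0 (fun j => u (m + j)%nat) k).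
  { assert (head : forall n, (n < m)%nat -> sum_f_R0 u n = 0).
    { induction n as [|n IH]; intro hn; simpl; [apply hlow; lia|].
      rewrite IH, hlow by lia; ring. }
    induction k as [|k IH].
    - destruct m as [|m]; [reflexivity|].
      simpl; rewrite !Nat.add_0_r, head by lia; ring.
    - rewrite Nat.add_succ_r; simpl; rewrite IH, Nat.add_succ_r; reflexivity. }
  intros e he; destruct (hs e he) as [N hN]; exists (m + N)%nat; intros n hn.
  replace n with (m + (n - m))%nat by lia.
  rewrite partial; apply hN; lia.
Qed.

Lemma Cseries_unique t l1 l2 : Cseries t l1 -> Cseries t l2 -> l1 = l2.
Proof.
  intros [h1 h1'] [h2 h2']; destruct l1, l2; simpl in *.
  f_equal; eapply uniqueness_sum; eauto.
Qed.

Lemma Cseries_affine (r : nat -> R) (l : R) (t : nat -> Cplx) (b d : Cplx) :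
  infinite_sum r l ->
  (forall n, t n = Cadd (Cmul (RtoC (r n)) b) (Cconst d n)) ->
  Cseries t (Cadd (Cmul (RtoC l) b) d).
Proof.
  intros hs ht; destruct b as [b1 b2], d as [d1 d2]; split; simpl.
  - replace (l * b1 - 0 * b2 + d1) with (b1 * l + d1) by ring.
    apply (infinite_sum_affine r); [exact hs|].
    intro n; rewrite ht; destruct n; simpl; ring.
  - replace (l * b2 + 0 * b1 + d2) with (b2 * l + d2) by ring.
    apply (infinite_sum_affine r); [exact hs|].
    intro n; rewrite ht; destruct n; simpl; ring.
Qed.

Lemma Cseries_shift (t : nat -> Cplx) (m : nat) (l : Cplx) :
  (forall n, (n < m)%nat -> t n = Czero) ->
  Cseries (fun k => t (m + k)%nat) l -> Cseries t l.
Proof.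
  intros hlow [h1 h2]; split; apply (infinite_sum_shift _ m); auto;
    intros n hn; rewrite hlow by exact hn; reflexivity.
Qed.

Section KernelCombination.

Variables (omega : nat -> R) (a : Cplx).
Hypothesis omega_0 : omega O = 1.
Hypothesis omega_pos : forall n, 0 < omega n.

(** The terms of the series [K_a(a) = sum_n |a|^(2n) / omega_n]. *)
Definition Kdiag_term (n : nat) : R := Cnorm2 a ^ n / omega n.

Definition kcomb (alpha beta : Cplx) : nat -> Cplx :=
  Fadd (Cconst alpha) (Fscale beta (Kker omega a)).

Lemma Kker_mul_pow n : Cmul (Kker omega a n) (Cpow a n) = RtoC (Kdiag_term n).
Proof.
  unfold Kker, Kdiag_term, Rdiv; rewrite Cscale_RtoC.
  transitivity (Cmul (RtoC (/ omega n)) (Cmul (Cpow (Cconj a) n) (Cpow a n))); [ring|].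
  rewrite Cmul_conj_pow, RtoC_mul, Rmult_comm; reflexivity.
Qed.

Lemma Cconj_Kker n : Cconj (Kker omega a n) = Cmul (RtoC (/ omega n)) (Cpow a n).
Proof.
  unfold Kker; rewrite Cscale_RtoC, Cconj_mul, Cconj_RtoC, Cconj_pow, Cconj_involutive.
  reflexivity.
Qed.

Lemma Cnorm2_Kker n : Cnorm2 (Kker omega a n) = / omega n * / omega n * Cnorm2 a ^ n.
Proof.
  unfold Kker; rewrite Cscale_RtoC, Cnorm2_mul, Cnorm2_RtoC, Cnorm2_pow, Cnorm2_conj.
  reflexivity.
Qed.

Lemma peval_Kker_diag Kaa :
  peval (Kker omega a) a Kaa -> infinite_sum Kdiag_term (fst Kaa) /\ snd Kaa = 0.
Proof.
  unfold peval; intros [hre him].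
  assert (hterm : forall n, Cmul (Kker omega a n) (Cpow a n) = RtoC (Kdiag_term n))
    by apply Kker_mul_pow.
  split.
  - apply (infinite_sum_ext _ _ _ (fun n => f_equal fst (hterm n)) hre).
  - apply (uniqueness_sum (fun _ => 0)); [| exact infinite_sum_0].
    apply (infinite_sum_ext _ _ _ (fun n => f_equal snd (hterm n)) him).
Qed.

Lemma Kdiag_term_ge0 n : 0 <= Kdiag_term n.
Proof.
  unfold Kdiag_term, Rdiv; apply Rmult_le_pos;
    [apply pow_le, Cnorm2_ge0 | left; apply Rinv_0_lt_compat, omega_pos].
Qed.

Lemma Kdiag_sum_gt1 Ka : a <> Czero -> infinite_sum Kdiag_term Ka -> 1 < Ka.
Proof.
  intros ha hS.
  assert (hle := sum_incr Kdiag_term 1 Ka hS Kdiag_term_ge0).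
  assert (hpos : 0 < Kdiag_term 1)
    by (unfold Kdiag_term; simpl; apply Rdiv_lt_0_compat;
        [rewrite Rmult_1_r; apply Cnorm2_gt0, ha | apply omega_pos]).
  simpl in hle; unfold Kdiag_term at 1 in hle; simpl in hle.
  rewrite omega_0 in hle; lra.
Qed.

Lemma kcomb_mul_pow alpha beta k :
  Cmul (kcomb alpha beta k) (Cpow a k) =
  Cadd (Cmul (RtoC (Kdiag_term k)) beta) (Cconst alpha k).
Proof.
  unfold kcomb, Fadd, Fscale.
  transitivity (Cadd (Cmul (Cconst alpha k) (Cpow a k))
                     (Cmul beta (Cmul (Kker omega a k) (Cpow a k)))); [ring|].
  rewrite Kker_mul_pow; destruct k; simpl; ring.
Qed.

Lemma Cconj_kcomb alpha beta n : (1 <= n)%nat ->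
  Cmul (RtoC (omega n)) (Cconj (kcomb alpha beta n)) = Cmul (Cconj beta) (Cpow a n).
Proof.
  intro hn; destruct n as [|n]; [lia|].
  unfold kcomb, Fadd, Fscale, Cconst.
  replace (Cadd Czero (Cmul beta (Kker omega a (S n)))) with
    (Cmul beta (Kker omega a (S n))) by ring.
  rewrite Cconj_mul, Cconj_Kker.
  transitivity (Cmul (Cmul (RtoC (omega (S n))) (RtoC (/ omega (S n))))
                     (Cmul (Cconj beta) (Cpow a (S n)))); [ring|].
  rewrite RtoC_mul, Rinv_r by (apply Rgt_not_eq, omega_pos).
  change (RtoC 1) with Cone; ring.
Qed.

Lemma H2_norm2_kcomb alpha beta Ka : infinite_sum Kdiag_term Ka ->
  H2_norm2 omega (kcomb alpha beta)
    (Cnorm2 beta * Ka + (Cnorm2 (Cadd alpha beta) - Cnorm2 beta)).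
Proof.
  intro hS; apply (infinite_sum_affine Kdiag_term); [exact hS|].
  assert (hw := omega_pos).
  intros [|n]; unfold kcomb, Fadd, Fscale, Cconst, Kdiag_term.
  - replace (Kker omega a O) with Cone
      by (unfold Kker; simpl; rewrite omega_0, Rinv_1; Cplx_componentwise).
    rewrite omega_0; simpl.
    replace (Cmul beta Cone) with beta by ring.
    unfold Rdiv; rewrite Rinv_1; ring.
  - replace (Cadd Czero (Cmul beta (Kker omega a (S n)))) with
      (Cmul beta (Kker omega a (S n))) by ring.
    rewrite Cnorm2_mul, Cnorm2_Kker; field; apply Rgt_not_eq, hw.
Qed.

Lemma H2_inner_zshift_kcomb alpha beta Ka m : (1 <= m)%nat -> infinite_sum Kdiag_term Ka ->
  H2_inner omega (zshift m (kcomb alpha beta)) (kcomb alpha beta)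
    (Cmul (Cmul (Cpow a m) (Cconj beta)) (Cadd (Cmul (RtoC Ka) beta) alpha)).
Proof.
  intros hm hS; set (c := Cmul (Cpow a m) (Cconj beta)).
  apply (Cseries_shift _ m).
  - intros n hn; unfold zshift; rewrite (proj2 (Nat.ltb_lt _ _) hn).
    Cplx_componentwise.
  - replace (Cmul c (Cadd (Cmul (RtoC Ka) beta) alpha))
      with (Cadd (Cmul (RtoC Ka) (Cmul c beta)) (Cmul c alpha)) by ring.
    apply (Cseries_affine Kdiag_term); [exact hS|].
    intro k; unfold zshift; rewrite (proj2 (Nat.ltb_ge _ _)) by lia.
    replace (m + k - m)%nat with k by lia.
    rewrite Cscale_RtoC.
    transitivity (Cmul (kcomb alpha beta k)
                       (Cmul (RtoC (omega (m + k))) (Cconj (kcomb alpha beta (m + k)))));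
      [ring|].
    rewrite Cconj_kcomb by lia; rewrite Cpow_add.
    transitivity (Cmul c (Cmul (kcomb alpha beta k) (Cpow a k))); [unfold c; ring|].
    rewrite kcomb_mul_pow; destruct k; simpl; ring.
Qed.

Lemma H2_inner_fun_kcomb alpha beta Ka :
  a <> Czero -> beta <> Czero -> infinite_sum Kdiag_term Ka ->
  H2_inner_fun omega (kcomb alpha beta) <->
  alpha = Copp (Cmul beta (RtoC Ka)) /\ Cnorm2 beta * (Ka * (Ka - 1)) = 1.
Proof.
  intros ha hbe hKa.
  assert (hnorm : forall alpha, alpha = Copp (Cmul beta (RtoC Ka)) ->
            Cnorm2 beta * Ka + (Cnorm2 (Cadd alpha beta) - Cnorm2 beta) =
            Cnorm2 beta * (Ka * (Ka - 1))).
  { intros al ->.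
    replace (Cadd (Copp (Cmul beta (RtoC Ka))) beta) with (Cmul (RtoC (1 - Ka)) beta)
      by Cplx_componentwise.
    rewrite Cnorm2_mul, Cnorm2_RtoC; ring. }
  split.
  - intros [_ [hn hinner]].
    assert (hz := Cseries_unique _ _ _
                    (H2_inner_zshift_kcomb alpha beta Ka 1 (le_n _) hKa) (hinner 1%nat (le_n _))).
    destruct (Cmul_integral _ _ hz) as [hc | hsum].
    + exfalso; destruct (Cmul_integral _ _ hc) as [h | h].
      * apply ha; rewrite <- h; simpl; ring.
      * apply hbe; rewrite <- (Cconj_involutive beta), h; Cplx_componentwise.
    + assert (hal : alpha = Copp (Cmul beta (RtoC Ka))).
      { transitivity (Cadd (Cadd (Cmul (RtoC Ka) beta) alpha) (Copp (Cmul (RtoC Ka) beta)));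
          [ring | rewrite hsum; ring]. }
      split; [exact hal|].
      rewrite <- (hnorm alpha hal).
      exact (uniqueness_sum _ _ _ (H2_norm2_kcomb alpha beta Ka hKa) hn).
  - intros [hal hbe2].
    assert (hn : H2_norm2 omega (kcomb alpha beta) 1).
    { rewrite <- hbe2, <- (hnorm alpha hal); apply H2_norm2_kcomb, hKa. }
    split; [exists 1; exact hn | split; [exact hn|]].
    intros m hm.
    replace Czero with (Cmul (Cmul (Cpow a m) (Cconj beta)) (Cadd (Cmul (RtoC Ka) beta) alpha))
      by (rewrite hal; ring).
    apply H2_inner_zshift_kcomb; assumption.
Qed.

Lemma Fscale_kernel_difference c k :
  Fscale c (Fadd (Cconst k) (Fscale (Copp Cone) (Kker omega a))) =
  kcomb (Cmul c k) (Copp c).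
Proof.
  apply functional_extensionality; intros [|n];
    unfold kcomb, Fscale, Fadd, Cconst; ring.
Qed.

End KernelCombination.

Theorem mainTheorem12 (omega : nat -> R) (a : Cplx) (Kaa : Cplx) :
  admissible_weight omega ->
  Cmod a < 1 -> a <> Czero ->
  (* Kaa = K_a(a) *)
  peval (Kker omega a) a Kaa ->
  (forall alpha beta : Cplx, beta <> Czero ->
     H2_inner_fun omega (Fadd (Cconst alpha) (Fscale beta (Kker omega a))) ->
     alpha = Copp (Cmul beta Kaa) /\
     exists mu : Cplx, Cmod mu = 1 /\
       Fadd (Cconst alpha) (Fscale beta (Kker omega a)) =
       Fscale (Cmul mu (RtoC (/ sqrt (fst Kaa * (fst Kaa - 1)))))
              (Fadd (Cconst Kaa) (Fscale (Copp Cone) (Kker omega a)))) /\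
  (forall mu : Cplx, Cmod mu = 1 ->
     H2_inner_fun omega
       (Fscale (Cmul mu (RtoC (/ sqrt (fst Kaa * (fst Kaa - 1)))))
               (Fadd (Cconst Kaa) (Fscale (Copp Cone) (Kker omega a))))).
Proof.
  intros [hpos [h0 _]] _ ha hK.
  destruct (peval_Kker_diag omega a Kaa hK) as [hKa hKa_im].
  assert (hKa1 := Kdiag_sum_gt1 omega a h0 hpos _ ha hKa).
  assert (hKaa : Kaa = RtoC (fst Kaa))
    by (apply injective_projections; [reflexivity | exact hKa_im]).
  rewrite hKaa; change (fst (RtoC (fst Kaa))) with (fst Kaa).
  set (Ka := fst Kaa) in *; set (s := sqrt (Ka * (Ka - 1))).
  assert (hs : s * s = Ka * (Ka - 1)) by (apply sqrt_sqrt; nra).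
  assert (hs0 : 0 < s) by (apply sqrt_lt_R0; nra).
  split.
  - intros al be hbe hinner.
    change (Fadd (Cconst al) (Fscale be (Kker omega a))) with (kcomb omega a al be) in *.
    apply (H2_inner_fun_kcomb omega a h0 hpos al be Ka ha hbe hKa) in hinner as [hal hbe2].
    split; [exact hal|].
    exists (Cmul (Copp be) (RtoC s)); split.
    + apply Cmod_eq1; rewrite Cnorm2_mul, Cnorm2_opp, Cnorm2_RtoC, hs; exact hbe2.
    + rewrite Fscale_kernel_difference, Cmul_RtoC_inv_r, hal by lra; f_equal; ring.
  - intros mu hmu; apply Cmod_eq1 in hmu.
    assert (hc := Cnorm2_mul_RtoC_inv mu s ltac:(lra)); rewrite hmu, hs in hc.
    rewrite Fscale_kernel_difference.
    apply (H2_inner_fun_kcomb omega a h0 hpos _ _ Ka ha); [| exact hKa |].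
    + intro hz; rewrite <- Cnorm2_opp, hz in hc; unfold Cnorm2, Czero in hc; simpl in hc; lra.
    + split; [ring | rewrite Cnorm2_opp; exact hc].
Qed.
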